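(* Fix a query state $u\in\mathcal U$ and a level $p\in(0,1)$, and suppose the following hold. (A1, stochastic admissibility) The process $\{(U_t,E_t)\}_{t\in\mathbb Z}$ is strictly stationary. Let $\mathcal G_n(u)$ be a $\sigma$-field containing $\sigma\big(u,U_1,\dots,U_n,S_{K_n}(u),q_{1,n}(u),\dots,q_{n,n}(u)\big)$, with respect to which the weights are measurable. Define $$m_{i,n}(r;u)=\mathbb E\big[\mathbf 1\{E_i\le r\}\mid \mathcal G_n(u)\big],$$ $$D_n(u)=\sup_{r\in\mathbb R}\Big|\sum_{i=1}^n q_{i,n}(u)\{m_{i,n}(r;u)-F_{U_i}(r)\}\Big|,$$ $$R_n(u)=\sup_{r\in\mathbb R}\Big|\sum_{i=1}^n q_{i,n}(u)\big[\mathbf 1\{E_i\le r\}-m_{i,n}(r;u)\big]\Big|.$$ Assume $D_n(u)=o_p(1)$ and $R_n(u)\big/\big(\sum_{i=1}^n q_{i,n}(u)^2\big)^{1/2}=O_p(1)$. (A2, localization and weight size) $K_n\to\infty$, $K_n/n\to 0$, $h_n(u)\to 0$ in probability, and $\sum_{i=1}^n q_{i,n}(u)^2=O_p(K_n^{-1})$. (A3, local continuity and quantile identification) The local CDF modulus $$\omega_u(h)=\sup_{v\in\mathcal U,\ \|v-u\|_2\le h}\ \sup_{r\in\mathbb R}|F_v(r)-F_u(r)|$$ satisfies $\omega_u(h)\to0$ as $h\downarrow 0$; moreover $\xi^\star_{u,p}=\inf\{r:F_u(r)\ge p\}$ is finite, $F_u$ is continuous at $\xi^\star_{u,p}$, $F_u(\xi^\star_{u,p})=p$,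 and for every $\varepsilon>0$, $F_u(\xi^\star_{u,p}-\varepsilon)<p<F_u(\xi^\star_{u,p}+\varepsilon)$. Then $\Delta_n(u):=\sup_{r\in\mathbb R}|\widehat F_n(r\mid u)-F_u(r)|$ satisfies $$\Delta_n(u)\le R_n(u)+D_n(u)+\omega_u(h_n(u)),$$ $R_n(u)=O_p(K_n^{-1/2})$, and hence $\Delta_n(u)\to 0$ in probability. Consequently $\widehat\xi_{n,p}(u)\to \xi^\star_{u,p}$ in probability and $F_u(\widehat\xi_{n,p}(u))\to p$ in probability. If in addition $\widehat\xi_{n,p}(u)\to\xi^\star_{u,p}$ in probability under the joint conditional law $\mathcal L\big((U_i,E_i)_{i\le n},E_\star\mid U_\star=u\big)$ of the calibration data and a target residual $E_\star$ given target state $U_\star=u$, then $$\mathbb P\big(E_\star\le \widehat\xi_{n,p}(u)\mid U_\star=u\big)\to p,$$ and in particular, with $p=1-\alpha$ and $Y_\star=\widehat y_\star+E_\star$, the one-sided set $\widehat C^\alpha_{n,+}=(-\infty,\ \widehat y_\star+\widehat\xi_{n,1-\alpha}(U_\star)]$ satisfies $\mathbb P(Y_\star\in\widehat C^\alpha_{n,+}\mid U_\star=u)\to 1-\alpha$.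
   Context: Setting: $(U_t,E_t)_{t\in\mathbb Z}$ is a random process where $U_t=\widetilde Z_t/\|\widetilde Z_t\|_2\in\mathbb S^{d-1}$ is a normalized learned state ($\widetilde Z_t=\phi(A_t)\in\mathbb R^d$ with $\|\widetilde Z_t\|_2>0$ a.s., $\phi$ a fixed map chosen independently of the calibration residual labels), and $E_t=Y_t-\widehat y_t$ is a signed residual of a fixed forecasting rule $\widehat y_t$. Let $\mathcal U=\operatorname{supp}(U_t)$. For $v\in\mathcal U$, $F_v(r)=\mathbb P(E_\star\le r\mid U_\star=v)$ is a fixed regular conditional version of the conditional CDF of the residual given the state. Calibration indices are $\mathcal I_n=\{1,\dots,n\}$, and $K_n$ is a deterministic integer sequence with $1\le K_n\le n$ eventually. Retrieval: for a query $u\in\mathbb S^{d-1}$, $S_{K_n}(u)$ is the set of $K_n$ indices $i\in\mathcal I_n$ with largest cosine scores $U_i^\top u$ (ties broken by a deterministic rule depending only on the states, not on residuals); its radius is $h_n(u)=\max_{i\in S_{K_n}(u)}\|U_i-u\|_2$. Weights $q_{i,n}(u)\ge0$ satisfy $\sum_i q_{i,n}(u)=1$ and $q_{i,n}(u)=0$ for $i\notin S_{K_n}(u)$. The weighted empirical CDF is $\widehat F_n(r\mid u)=\sum_{i=1}^n q_{i,n}(u)\mathbf 1\{E_i\le r\}$ and the weighted quantile is $\widehat\xi_{n,p}(u)=\inf\{r:\widehat F_n(r\mid u)\ge p\}$. *)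

From mathcomp Require Import all_boot all_order all_algebra.
From mathcomp Require Import all_classical all_reals all_analysis.
Import Order.TTheory GRing.Theory Num.Theory.
Import numFieldNormedType.Exports.

Set Implicit Arguments.
Unset Strict Implicit.
Unset Printing Implicit Defensive.

Local Open Scope classical_set_scope.
Local Open Scope ring_scope.

Section Geometry.
Variables (R : realType) (d : nat).

Definition dotv (x y : 'rV[R]_d) : R := \sum_(j < d) x ord0 j * y ord0 j.

Definition enorm (x : 'rV[R]_d) : R := Num.sqrt (dotv x x).

Definition eopen (A : set 'rV[R]_d) : Prop :=
  forall x, A x -> exists2 e : R, 0 < e &
    forall y, enorm (y - x) < e -> A y.

Definition borelV : set (set 'rV[R]_d) := <<s [set A | eopen A] >>.

End Geometry.

Section Proba.
Variables (R : realType) (dO : measure_display) (Omega : measurableType dO).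

(** Used so that "in probability" statements make sense for possibly
    non-measurable suprema (it coincides with P on measurable sets). *)
Definition outP (P : probability Omega R) (A : set Omega) : \bar R :=
  ereal_inf [set P B | B in [set B | measurable B /\ A `<=` B]].

Definition cvg_prob0 (P : probability Omega R) (X : nat -> Omega -> \bar R)
  : Prop :=
  forall eps delta : R, 0 < eps -> 0 < delta ->
    exists N : nat, forall n, (N <= n)%N ->
      (outP P [set w | (eps%:E < `|X n w|)%E] < delta%:E)%E.

Definition bounded_prob (P : probability Omega R) (X : nat -> Omega -> \bar R)
  : Prop :=
  forall delta : R, 0 < delta ->
    exists2 M : R, 0 < M & exists N : nat, forall n, (N <= n)%N ->
      (outP P [set w | (M%:E < `|X n w|)%E] < delta%:E)%E.

Definition Gmeas (G : set (set Omega)) (Y : Omega -> R) : Prop :=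
  forall B : set R, measurable B -> G (Y @^-1` B).

Definition cexp_version (P : probability Omega R) (G : set (set Omega))
  (X Y : Omega -> R) : Prop :=
  [/\ Gmeas G Y, P.-integrable setT (EFin \o Y) &
      forall A, G A ->
        (\int[P]_(w in A) (Y w)%:E = \int[P]_(w in A) (X w)%:E)%E ].

Definition rvV (d : nat) (X : Omega -> 'rV[R]_d) : Prop :=
  forall B, borelV B -> measurable (X @^-1` B).

(** Strict stationarity of (U_t, E_t)_{t in Z}: all finite-dimensional
    distributions are shift invariant (checked on measurable rectangles,
    which form a generating pi-system of the finite-dimensional
    product sigma-fields). *)
Definition strictly_stationary (P : probability Omega R) (d : nat)
  (U : int -> Omega -> 'rV[R]_d) (E : int -> Omega -> R) : Prop :=
  forall (k : nat) (t : 'I_k -> int) (s : int)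
         (B : 'I_k -> set 'rV[R]_d) (C : 'I_k -> set R),
    (forall j, borelV (B j)) -> (forall j, measurable (C j)) ->
    P [set w | forall j, B j (U (t j) w) /\ C j (E (t j) w)] =
    P [set w | forall j, B j (U (t j + s) w) /\ C j (E (t j + s) w)].

Definition supportV (P : probability Omega R) (d : nat)
  (X : Omega -> 'rV[R]_d) : set 'rV[R]_d :=
  [set v | forall e : R, 0 < e -> (0 < P [set w | (enorm (X w - v) < e)%R])%E].

End Proba.

Definition is_cdf (R : realType) (G : R -> R) : Prop :=
  [/\ {homo G : x y / x <= y},
      (forall x : R, (G y @[y --> x^'+] --> G x)),
      (G y @[y --> -oo] --> (0:R)) &
      (G y @[y --> +oo] --> (1:R))].

Section Retrieval.
Variables (R : realType) (dO : measure_display) (Omega : measurableType dO).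
Variable (d : nat).

(** calibration index i : 'I_n  stands for the time  i+1 in {1,...,n}. *)
Definition cidx (n : nat) (i : 'I_n) : int := (i.+1)%:Z.

(** sel is a top-K retrieval rule: for a query x and calibration states
    s : 'I_n -> R^d, sel x n s has exactly K_n elements with largest
    cosine score s_i^T x (ties broken in any way depending only on the
    states). *)
Definition topK_rule (K : nat -> nat)
  (sel : 'rV[R]_d -> forall n, ('I_n -> 'rV[R]_d) -> {set 'I_n}) : Prop :=
  forall x n (s : 'I_n -> 'rV[R]_d), (K n <= n)%N ->
    #|sel x n s| = K n /\
    forall i j, i \in sel x n s -> j \notin sel x n s ->
      dotv (s j) x <= dotv (s i) x.

Definition Sret (U : int -> Omega -> 'rV[R]_d)
  (sel : 'rV[R]_d -> forall n, ('I_n -> 'rV[R]_d) -> {set 'I_n})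
  (x : 'rV[R]_d) (n : nat) (w : Omega) : {set 'I_n} :=
  sel x n (fun i => U (cidx i) w).

Definition hrad (U : int -> Omega -> 'rV[R]_d)
  (sel : 'rV[R]_d -> forall n, ('I_n -> 'rV[R]_d) -> {set 'I_n})
  (x : 'rV[R]_d) (n : nat) (w : Omega) : R :=
  \big[Num.max/0]_(i in Sret U sel x n w) enorm (U (cidx i) w - x).

Definition weights_ok (K : nat -> nat) (U : int -> Omega -> 'rV[R]_d)
  (sel : 'rV[R]_d -> forall n, ('I_n -> 'rV[R]_d) -> {set 'I_n})
  (q : 'rV[R]_d -> forall n, 'I_n -> Omega -> R) : Prop :=
  forall x n w, enorm x = 1 -> (1 <= K n <= n)%N ->
    [/\ forall i, 0 <= q x n i w,
        \sum_(i < n) q x n i w = 1 &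
        forall i, i \notin Sret U sel x n w -> q x n i w = 0].

Definition Fhat (E : int -> Omega -> R)
  (q : 'rV[R]_d -> forall n, 'I_n -> Omega -> R)
  (x : 'rV[R]_d) (n : nat) (w : Omega) (r : R) : R :=
  \sum_(i < n) q x n i w * ((E (cidx i) w <= r)%R)%:R.

Definition xihat (E : int -> Omega -> R)
  (q : 'rV[R]_d -> forall n, 'I_n -> Omega -> R)
  (p : R) (x : 'rV[R]_d) (n : nat) (w : Omega) : \bar R :=
  ereal_inf [set r%:E | r in [set r | p <= Fhat E q x n w r]].

Definition Deltan (E : int -> Omega -> R)
  (q : 'rV[R]_d -> forall n, 'I_n -> Omega -> R) (F : 'rV[R]_d -> R -> R)
  (x : 'rV[R]_d) (n : nat) (w : Omega) : \bar R :=
  ereal_sup [set (`|Fhat E q x n w r - F x r|)%:E | r in [set: R]].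

Definition Dn (U : int -> Omega -> 'rV[R]_d)
  (q : 'rV[R]_d -> forall n, 'I_n -> Omega -> R) (F : 'rV[R]_d -> R -> R)
  (m : forall n, 'I_n -> R -> Omega -> R)
  (x : 'rV[R]_d) (n : nat) (w : Omega) : \bar R :=
  ereal_sup [set (`|\sum_(i < n) q x n i w *
                     (m n i r w - F (U (cidx i) w) r)|)%:E | r in [set: R]].

Definition Rn (E : int -> Omega -> R)
  (q : 'rV[R]_d -> forall n, 'I_n -> Omega -> R)
  (m : forall n, 'I_n -> R -> Omega -> R)
  (x : 'rV[R]_d) (n : nat) (w : Omega) : \bar R :=
  ereal_sup [set (`|\sum_(i < n) q x n i w *
                     (((E (cidx i) w <= r)%R)%:R - m n i r w)|)%:E
            | r in [set: R]].

Definition sumq2 (q : 'rV[R]_d -> forall n, 'I_n -> Omega -> R)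
  (x : 'rV[R]_d) (n : nat) (w : Omega) : R :=
  \sum_(i < n) q x n i w ^+ 2.

End Retrieval.

Definition omega_mod (R : realType) (d : nat) (supp : set 'rV[R]_d)
  (F : 'rV[R]_d -> R -> R) (u : 'rV[R]_d) (h : R) : \bar R :=
  ereal_sup [set (`|F vr.1 vr.2 - F u vr.2|)%:E
            | vr in [set vr : 'rV[R]_d * R |
                     supp vr.1 /\ enorm (vr.1 - u) <= h]].

(* For each r, Fhat_n(r|u) - F_u(r) splits into a conditional fluctuation
   (bounded by R_n), a conditional-mean bias (bounded by D_n) and a
   localisation bias, which is at most omega_u(h_n(u)) once every retrieved
   state lies in the support of U_0; by stationarity and a Lindelof argument
   this holds almost surely.  R_n = O_p(K_n^{-1/2}) is the product of the two
   O_p assumptions, hence Delta_n -> 0 in probability.  A uniform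
   g-approximation of F_u traps the weighted quantile within e of xi* as soon
   as g is below the identification gap at e; continuity of F_u at xi* gives
   F_u(xihat) -> p, and coverage follows by sandwiching {E* <= xihat} between
   {E* <= xi* -+ e} up to the event |xihat - xi*| > e. *)

From mathcomp Require Import all_boot all_order all_algebra.
From mathcomp Require Import all_classical all_reals all_analysis.
From mathcomp Require Import ring lra.
Import Order.TTheory GRing.Theory Num.Theory.
Import numFieldNormedType.Exports.

Set Implicit Arguments.
Unset Strict Implicit.
Unset Printing Implicit Defensive.

Local Open Scope classical_set_scope.
Local Open Scope ring_scope.

Section Euclid.
Variables (R : realType) (d : nat).
Implicit Types (x y z c : 'rV[R]_d) (a r : R).

Lemma dotvC x y : dotv x y = dotv y x.
Proof. by apply: eq_bigr => j _; rewrite mulrC. Qed.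

Lemma dotvDl x y z : dotv (x + y) z = dotv x z + dotv y z.
Proof. by rewrite /dotv -big_split; apply: eq_bigr => j _; rewrite !mxE mulrDl. Qed.

Lemma dotvNl x z : dotv (- x) z = - dotv x z.
Proof. by rewrite /dotv -sumrN; apply: eq_bigr => j _; rewrite !mxE mulNr. Qed.

Lemma dotvZl a x z : dotv (a *: x) z = a * dotv x z.
Proof. by rewrite /dotv mulr_sumr; apply: eq_bigr => j _; rewrite !mxE mulrA. Qed.

Lemma dotv0r x : dotv x 0 = 0.
Proof. by rewrite /dotv big1 // => j _; rewrite mxE mulr0. Qed.

Lemma dotvv_ge0 x : 0 <= dotv x x.
Proof. by apply: sumr_ge0 => j _; rewrite -expr2 sqr_ge0. Qed.

Lemma dotvv_eq0 x : dotv x x = 0 -> x = 0.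
Proof.
move=> /eqP; rewrite /dotv psumr_eq0 => [/allP xx0|j _]; last by rewrite -expr2 sqr_ge0.
apply/rowP => j; rewrite mxE; apply/eqP.
by rewrite -sqrf_eq0 expr2; exact: implyP (xx0 j (mem_index_enum _)) isT.
Qed.

Lemma dotv_sqr_le x y : dotv x y ^+ 2 <= dotv x x * dotv y y.
Proof.
have [/dotvv_eq0 ->|yy0] := eqVneq (dotv y y) 0; first by rewrite !dotv0r expr0n mulr0.
have yy_gt0 : 0 < dotv y y by rewrite lt_neqAle eq_sym yy0 dotvv_ge0.
set t := dotv x y / dotv y y.
have := dotvv_ge0 (x - t *: y).
rewrite !(dotvDl, dotvNl, dotvZl) ![dotv _ (_ - _)]dotvC !(dotvDl, dotvNl, dotvZl).
rewrite [dotv y x]dotvC.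
have -> : dotv x x - t * dotv x y - t * (dotv x y - t * dotv y y)
          = dotv x x - dotv x y ^+ 2 / dotv y y by rewrite /t; field.
by rewrite subr_ge0 ler_pdivrMr.
Qed.

Lemma enorm_ge0 x : 0 <= enorm x.
Proof. exact: sqrtr_ge0. Qed.

Lemma enorm_sqr x : enorm x ^+ 2 = dotv x x.
Proof. by rewrite sqr_sqrtr // dotvv_ge0. Qed.

Lemma enorm_eq0 x : enorm x = 0 -> x = 0.
Proof. by move=> x0; apply: dotvv_eq0; rewrite -enorm_sqr x0 expr0n. Qed.

Lemma enorm0 : enorm (0 : 'rV[R]_d) = 0.
Proof. by rewrite /enorm dotv0r sqrtr0. Qed.

Lemma enormN x : enorm (- x) = enorm x.
Proof. by rewrite /enorm dotvNl dotvC dotvNl opprK. Qed.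

Lemma enormB x y : enorm (x - y) = enorm (y - x).
Proof. by rewrite -enormN opprB. Qed.

Lemma dotv_le_enorm x y : dotv x y <= enorm x * enorm y.
Proof.
apply: le_trans (ler_norm _) _.
rewrite -sqrtr_sqr /enorm -sqrtrM ?dotvv_ge0 // ler_sqrt ?mulr_ge0 ?dotvv_ge0 //.
exact: dotv_sqr_le.
Qed.

Lemma enormD x y : enorm (x + y) <= enorm x + enorm y.
Proof.
rewrite -(ler_pXn2r (_ : 0 < 2)%N) ?nnegrE ?addr_ge0 ?enorm_ge0 //.
have -> : enorm (x + y) ^+ 2 = dotv x x + 2 * dotv x y + dotv y y.
  rewrite enorm_sqr dotvDl ![dotv _ (_ + _)]dotvC !dotvDl [dotv x y]dotvC; ring.
by rewrite sqrrD !enorm_sqr; have := dotv_le_enorm x y; lra.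
Qed.

Definition eball c r := [set v : 'rV[R]_d | enorm (v - c) < r].

Lemma eball_sub c1 c2 r1 r2 : enorm (c1 - c2) + r1 <= r2 ->
  eball c1 r1 `<=` eball c2 r2.
Proof.
move=> le_r y; rewrite /eball /= => y1.
have -> : y - c2 = (y - c1) + (c1 - c2) by rewrite addrA subrK.
by apply: le_lt_trans (enormD _ _) _; lra.
Qed.

Lemma eopen_eball c r : eopen (eball c r).
Proof.
move=> x x_in; exists (r - enorm (x - c)); first by rewrite subr_gt0.
by apply: eball_sub; rewrite enormB; lra.
Qed.

Lemma borelV_eball c r : borelV (eball c r).
Proof. by apply: sub_sigma_algebra; exact: eopen_eball. Qed.

Lemma borelV_set1 c : borelV [set v | v = c].
Proof.
have -> : [set v | v = c] = setT `\` [set v | v <> c].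
  apply/seteqP; split => v /=; first by move=> ->; split => // /(_ erefl).
  by case=> _ /contrapT.
apply: sigma_algebraCD; apply: sub_sigma_algebra => x /= xc.
exists (enorm (x - c)) => [|y]; last by rewrite enormB => + yc; rewrite yc ltxx.
rewrite lt_neqAle enorm_ge0 andbT eq_sym; apply/eqP => /enorm_eq0/eqP.
by rewrite subr_eq0 => /eqP.
Qed.

Lemma rat_row_approx x e : 0 < e ->
  exists c : 'rV[rat]_d, enorm (map_mx ratr c - x) < e.
Proof.
move=> e_gt0; set eta := e / d.+1%:R.
have eta_gt0 : 0 < eta by rewrite divr_gt0.
have near_j (j : 'I_d) : exists q : rat, `|ratr q - x ord0 j| < eta.
  have [|q] := @rat_in_itvoo _ (x ord0 j - eta) (x ord0 j + eta); first lra.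
  by rewrite in_itv /= => /andP[? ?]; exists q; rewrite ltr_norml; apply/andP; lra.
have [f f_near] := choice near_j.
exists (\row_j f j).
rewrite /enorm -(gtr0_norm e_gt0) -sqrtr_sqr ltr_sqrt ?exprn_gt0 ?normr_gt0 ?gt_eqF //.
apply: (@le_lt_trans _ _ (\sum_(j < d) eta ^+ 2)).
  apply: ler_sum => j _; rewrite !mxE -expr2 -real_normK ?num_real //.
  by rewrite lerXn2r ?nnegrE ?normr_ge0 ?ltW.
rewrite sumr_const card_ord -mulr_natl /eta expr_div_n mulrA.
rewrite ltr_pdivrMr ?exprn_gt0 ?ltr0Sn // mulrC ltr_pM2l ?exprn_gt0 //.
by rewrite -natrX ltr_nat expnS (@leq_trans d.+1) // leq_pmulr.
Qed.

End Euclid.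

Section Support.
Variables (R : realType) (dO : measure_display) (Omega : measurableType dO).
Variables (P : probability Omega R) (d : nat).

Definition rat_center (j : nat) : 'rV[R]_d :=
  if unpickle j is Some c then map_mx ratr c else 0.

Definition rat_ball (j k : nat) := eball (rat_center j) k.+1%:R^-1.

(* Lindelof: the complement of the support is covered by the countably many
   P_X-null balls with rational centres and radii 1/(k+1). *)
Definition null_ball_cover (X : Omega -> 'rV[R]_d) : set 'rV[R]_d :=
  \bigcup_j \bigcup_k
    (if P (X @^-1` rat_ball j k) == 0%E then rat_ball j k else set0).

Lemma borelV_null_ball_cover X : borelV (null_ball_cover X).
Proof.
apply: sigma_algebra_bigcup => j; apply: sigma_algebra_bigcup => k.
by case: ifP => _; [exact: borelV_eball | exact: sigma_algebra0].
Qed.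

Lemma null_ball_cover_null X : rvV X -> P (X @^-1` null_ball_cover X) = 0%E.
Proof.
move=> mX; apply/negligibleP; first by apply: mX; exact: borelV_null_ball_cover.
rewrite preimage_bigcup; apply: negligible_bigcup => j.
rewrite preimage_bigcup; apply: negligible_bigcup => k.
case: ifP => [/eqP Pball0|_]; last by rewrite preimage_set0; exact: negligible_set0.
by apply/negligibleP; first by apply: mX; exact: borelV_eball.
Qed.

Lemma not_supportV_cover X : rvV X -> ~` supportV P X `<=` null_ball_cover X.
Proof.
move=> mX v /existsNP[e /not_implyP[e_gt0 /negP]].
rewrite -leNgt le_eqVlt ltNge measure_ge0 orbF => /eqP Pball0.
set k := Num.truncn (2 / e).
have k_gt0 : 0 < k.+1%:R :> R by rewrite ltr0Sn.
have two_k_lt_e : 2 * k.+1%:R^-1 < e.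
  have : 2 / e < k.+1%:R by exact: truncnS_gt.
  by rewrite !ltr_pdivrMr // mulrC.
have [c c_near] : exists c : 'rV[rat]_d, enorm (map_mx ratr c - v) < k.+1%:R^-1.
  by apply: rat_row_approx; rewrite invr_gt0.
have center_c : rat_center (pickle c) = map_mx ratr c by rewrite /rat_center pickleK.
have ball_sub : rat_ball (pickle c) k `<=` eball v e.
  rewrite /rat_ball center_c; apply: eball_sub.
  by move: two_k_lt_e c_near; set y := k.+1%:R^-1; lra.
exists (pickle c) => //; exists k => //.
have -> : P (X @^-1` rat_ball (pickle c) k) == 0%E.
  have mball c' r : measurable (X @^-1` eball c' r) by apply: mX; exact: borelV_eball.
  rewrite eq_le measure_ge0 andbT -Pball0 le_measure ?inE //.
  - exact: mball.
  - exact: (mball v e).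
  - by move=> w /ball_sub.
by rewrite /rat_ball /eball center_c /= enormB.
Qed.

Lemma stationary_preimage (U : int -> Omega -> 'rV[R]_d) (E : int -> Omega -> R)
    t B :
  strictly_stationary P U E -> borelV B -> P (U t @^-1` B) = P (U 0 @^-1` B).
Proof.
move=> stat mB.
have := stat 1%N (fun _ => 0) t (fun _ => B) (fun _ => setT) (fun _ => mB)
  (fun _ => measurableT).
have single s : [set w | forall j : 'I_1, B (U s w) /\ [set: R] (E s w)] =
                U s @^-1` B.
  by apply/seteqP; split => w /=; [move=> /(_ ord0) [] | move=> ? j].
by rewrite !single add0r => ->.
Qed.

Lemma stationary_states_in_supportV (U : int -> Omega -> 'rV[R]_d)
    (E : int -> Omega -> R) :
  (forall t, rvV (U t)) -> strictly_stationary P U E ->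
  {ae P, forall w, forall k : nat, supportV P (U 0) (U k%:Z w)}.
Proof.
move=> mU stat; set N := null_ball_cover (U 0).
have mN k : measurable (U k%:Z @^-1` N) by apply: mU; exact: borelV_null_ball_cover.
exists (\bigcup_k U k%:Z @^-1` N); split.
- exact: bigcupT_measurable.
- apply/negligibleP; first exact: bigcupT_measurable.
  apply: negligible_bigcup => k; apply/negligibleP; first exact: mN.
  apply: eq_trans (stationary_preimage _ stat (borelV_null_ball_cover _)) _.
  exact: null_ball_cover_null.
- move=> w /= /existsNP[k /(not_supportV_cover (mU 0)) Nk].
  by exists k.
Qed.

End Support.

Lemma ereal_dist_le (R : realType) (y : \bar R) (x eta : R) :
  ~ (eta%:E < `|y - x%:E|)%E -> exists2 r, y = r%:E & `|r - x| <= eta.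
Proof.
move/negP; rewrite -leNgt.
by case: y => [r| |] /=; rewrite ?leye_eq // lee_fin => ?; exists r.
Qed.

Section OuterProbability.
Variables (R : realType) (dO : measure_display) (Omega : measurableType dO).
Variable P : probability Omega R.
Implicit Types A B C : set Omega.
Local Open Scope ereal_scope.

Lemma outP_le_measure A C : measurable C -> A `<=` C -> outP P A <= P C.
Proof. by move=> mC AC; apply: ereal_inf_lbound; exists C. Qed.

Lemma measure_le_outP C : measurable C -> P C <= outP P C.
Proof.
by move=> mC; apply: le_ereal_inf_tmp => _ [B [mB CB] <-]; rewrite le_measure ?inE.
Qed.

Lemma outP_ge0 A : 0 <= outP P A.
Proof. by apply: le_ereal_inf_tmp => _ [C _ <-]; exact: measure_ge0. Qed.

Lemma outP_fin A : outP P A \is a fin_num.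
Proof.
rewrite ge0_fin_numE ?outP_ge0 //; apply: le_lt_trans (ltry 1).
by rewrite -(probability_setT P); exact: outP_le_measure.
Qed.

Lemma outP_le_ae A B : {ae P, forall w, A w -> B w} -> outP P A <= outP P B.
Proof.
move=> [N [mN PN0 AB]]; apply: le_ereal_inf_tmp => _ [C [mC BC] <-].
rewrite -(measureU0 mC mN PN0); apply: outP_le_measure; first exact: measurableU mC mN.
move=> w Aw; have [Nw|Nw] := pselect (N w); first by right.
by left; apply: BC; apply: contrapT => nBw; apply: Nw; apply: AB => /(_ Aw).
Qed.

Lemma outP_mono A B : A `<=` B -> outP P A <= outP P B.
Proof. by move=> AB; apply/outP_le_ae/aeW. Qed.

Lemma outP_ae_eq A B : {ae P, forall w, A w <-> B w} -> outP P A = outP P B.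
Proof.
by move=> AB; apply/eqP; rewrite eq_le !outP_le_ae //; apply: filterS AB => w [].
Qed.

Lemma outP_eq_on_prob1 (S A B : set Omega) :
  measurable S -> P S = 1 -> (forall w, S w -> A w <-> B w) ->
  outP P A = outP P B.
Proof.
move=> mS PS1 AB; apply: outP_ae_eq; exists (~` S); split.
- exact: measurableC.
- by rewrite probability_setC // PS1 subee.
- by move=> w /= nAB Sw; exact/nAB/AB.
Qed.

Lemma outP_ltU A A1 A2 (a1 a2 : R) : A `<=` A1 `|` A2 ->
  outP P A1 < a1%:E -> outP P A2 < a2%:E -> outP P A < (a1 + a2)%:E.
Proof.
move=> A12 /ereal_inf_lt[_ [C1 [mC1 AC1] <-] PC1] /ereal_inf_lt[_ [C2 [mC2 AC2] <-] PC2].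
apply: (@le_lt_trans _ _ (P (C1 `|` C2))).
  apply: outP_le_measure; first exact: measurableU mC1 mC2.
  by move=> w /A12 [/AC1|/AC2]; [left|right].
by apply: le_lt_trans (measureU2 _ mC1 mC2) _; rewrite EFinD lteD.
Qed.

End OuterProbability.

Section InProbability.
Variables (R : realType) (dO : measure_display) (Omega : measurableType dO).
Variable P : probability Omega R.
Implicit Types X Y : nat -> Omega -> \bar R.
Local Open Scope ereal_scope.

Lemma cvg_prob0_le_ae X Y :
  (exists N, forall n, (N <= n)%N -> {ae P, forall w, `|X n w| <= `|Y n w|}) ->
  cvg_prob0 P Y -> cvg_prob0 P X.
Proof.
move=> [N0 XY] Y0 eps delta eps_gt0 delta_gt0.
have [N YN] := Y0 eps delta eps_gt0 delta_gt0.
exists (maxn N0 N) => n; rewrite geq_max => /andP[N0n Nn].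
apply: le_lt_trans (YN n Nn); apply: outP_le_ae.
by apply: filterS (XY n N0n) => w XYw /= /lt_le_trans; apply.
Qed.

Lemma cvg_prob0D X Y : cvg_prob0 P X -> cvg_prob0 P Y ->
  cvg_prob0 P (fun n w => X n w + Y n w).
Proof.
move=> X0 Y0 eps delta eps_gt0 delta_gt0.
have eps2 : (0 < eps / 2)%R by rewrite divr_gt0.
have delta2 : (0 < delta / 2)%R by rewrite divr_gt0.
have [NX hX] := X0 _ _ eps2 delta2; have [NY hY] := Y0 _ _ eps2 delta2.
exists (maxn NX NY) => n; rewrite geq_max => /andP[NXn NYn].
rewrite [delta]splitr; apply: outP_ltU (hX n NXn) (hY n NYn) => w /= XY.
apply/orP; move: XY; apply: contraTT; rewrite negb_or -!leNgt => /andP[Xw Yw].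
by rewrite [eps]splitr EFinD (le_trans (lee_abs_add _ _)) ?leeD.
Qed.

Lemma bounded_prob_le X Y :
  (exists N, forall n, (N <= n)%N -> forall w, `|X n w| <= `|Y n w|) ->
  bounded_prob P Y -> bounded_prob P X.
Proof.
move=> [N0 XY] bY delta delta_gt0.
have [M M_gt0 [N YN]] := bY delta delta_gt0.
exists M => //; exists (maxn N0 N) => n; rewrite geq_max => /andP[N0n Nn].
apply: le_lt_trans (YN n Nn); apply: outP_mono => w /= /lt_le_trans; apply.
exact: XY.
Qed.

Lemma bounded_probM X Y : bounded_prob P X -> bounded_prob P Y ->
  bounded_prob P (fun n w => X n w * Y n w).
Proof.
move=> bX bY delta delta_gt0.
have delta2 : (0 < delta / 2)%R by rewrite divr_gt0.
have [MX MX_gt0 [NX hX]] := bX _ delta2; have [MY MY_gt0 [NY hY]] := bY _ delta2.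
exists (MX * MY)%R; first by rewrite mulr_gt0.
exists (maxn NX NY) => n; rewrite geq_max => /andP[NXn NYn].
rewrite [delta]splitr; apply: outP_ltU (hX n NXn) (hY n NYn) => w /= XY.
apply/orP; move: XY; apply: contraTT; rewrite negb_or -!leNgt => /andP[XM YM].
by rewrite abseM EFinM lee_pmul.
Qed.

Lemma bounded_prob_sqrt (f : nat -> Omega -> R) :
  bounded_prob P (fun n w => (f n w)%:E) ->
  bounded_prob P (fun n w => (Num.sqrt (f n w))%:E).
Proof.
move=> bf delta delta_gt0; have [M M_gt0 [N hN]] := bf _ delta_gt0.
exists (Num.sqrt M); first by rewrite sqrtr_gt0.
exists N => n Nn; apply: le_lt_trans (hN n Nn); apply: outP_mono => w /=.
apply: contraTT; rewrite -!leNgt !lee_fin => fM.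
by rewrite ger0_norm ?sqrtr_ge0 // ler_sqrt ?(ltW M_gt0) // (le_trans (ler_norm _)).
Qed.

Lemma bounded_prob_cvg0 X (c : nat -> R) :
  (forall M : R, exists N, forall n, (N <= n)%N -> (M < c n)%R) ->
  bounded_prob P (fun n w => X n w * (c n)%:E) -> cvg_prob0 P X.
Proof.
move=> c_oo bXc eps delta eps_gt0 delta_gt0.
have [M M_gt0 [N1 hN1]] := bXc _ delta_gt0.
have [N2 hN2] := c_oo (M / eps)%R.
exists (maxn N1 N2) => n; rewrite geq_max => /andP[N1n N2n].
have Mc := hN2 n N2n.
have c_gt0 : (0 < c n)%R by apply: lt_trans Mc; rewrite divr_gt0.
apply: le_lt_trans (hN1 n N1n); apply: outP_mono => w /= Xw.
rewrite abseM abse_EFin gtr0_norm // -[M](@divfK _ eps) ?gt_eqF // mulrC EFinM.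
by apply: lte_pmul; rewrite ?lee_fin ?lte_fin ?divr_ge0 ?ltW.
Qed.

Lemma cvg_prob0_modulus (phi : R -> \bar R) (H : nat -> Omega -> R) :
  (forall h, (0 <= h)%R -> 0 <= phi h) ->
  (forall h1 h2, (0 <= h1 <= h2)%R -> phi h1 <= phi h2) ->
  (forall eps : R, (0 < eps)%R -> exists2 delta : R, (0 < delta)%R &
     forall h : R, (0 < h)%R -> (h < delta)%R -> phi h < eps%:E) ->
  (forall n w, (0 <= H n w)%R) ->
  cvg_prob0 P (fun n w => (H n w)%:E) -> cvg_prob0 P (fun n w => phi (H n w)).
Proof.
move=> phi_ge0 phi_mono phi0 H_ge0 H0 eps delta eps_gt0 delta_gt0.
have [h0 h0_gt0 phi_small] := phi0 _ eps_gt0.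
have h02 : (0 < h0 / 2)%R by rewrite divr_gt0.
have [N hN] := H0 _ _ h02 delta_gt0.
exists N => n Nn; apply: le_lt_trans (hN n Nn); apply: outP_mono => w /=.
apply: contraTT; rewrite -!leNgt lee_fin ger0_norm // gee0_abs ?phi_ge0 // => Hh0.
apply: le_trans (phi_mono _ _ _) (ltW (phi_small _ h02 _)); last by lra.
by rewrite H_ge0 Hh0.
Qed.

Lemma cvg_prob0_continuous X (f : R -> R) (x : R) :
  (forall e : R, (0 < e)%R -> exists2 del : R, (0 < del)%R &
     forall r, (`|r - x| < del)%R -> (`|f r - f x| < e)%R) ->
  cvg_prob0 P (fun n w => X n w - x%:E) ->
  cvg_prob0 P (fun n w => (f (fine (X n w)) - f x)%:E).
Proof.
move=> f_cont X0 eps delta eps_gt0 delta_gt0.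
have [del del_gt0 f_near] := f_cont _ eps_gt0.
have del2 : (0 < del / 2)%R by rewrite divr_gt0.
have [N hN] := X0 _ _ del2 delta_gt0.
exists N => n Nn; apply: le_lt_trans (hN n Nn); apply: outP_mono => w /=.
apply: contraTT; rewrite -!leNgt.
case: (X n w) => [r| |] /=; rewrite ?leye_eq // lee_fin => rx.
by rewrite lee_fin ltW // f_near //; lra.
Qed.

Lemma outP_le_ub (Es : Omega -> R) (Y : Omega -> \bar R) (x eta a b : R) :
  measurable [set w | (Es w <= x + eta)%R] ->
  P [set w | (Es w <= x + eta)%R] < a%:E ->
  outP P [set w | eta%:E < `|Y w - x%:E|] < b%:E ->
  outP P [set w | (Es w)%:E <= Y w] < (a + b)%:E.
Proof.
move=> mEs PEs Yx.
apply: outP_ltU _ (le_lt_trans (outP_le_measure P mEs (@subset_refl _ _)) PEs) Yx.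
move=> w EsY; have [|/ereal_dist_le[r Yr rx]] := pselect (eta%:E < `|Y w - x%:E|).
  by right.
by left; move: EsY; rewrite /= Yr lee_fin ler_norml in rx * => ?; lra.
Qed.

Lemma outP_le_lb (Es : Omega -> R) (Y : Omega -> \bar R) (x eta a b : R) :
  measurable [set w | (Es w <= x - eta)%R] ->
  (a + b)%:E <= P [set w | (Es w <= x - eta)%R] ->
  outP P [set w | eta%:E < `|Y w - x%:E|] < b%:E ->
  a%:E <= outP P [set w | (Es w)%:E <= Y w].
Proof.
move=> mEs PEs Yx; rewrite leNgt; apply/negP => EsY.
suff sub : [set w | (Es w <= x - eta)%R] `<=`
           [set w | (Es w)%:E <= Y w] `|` [set w | eta%:E < `|Y w - x%:E|].
  by have := le_lt_trans (measure_le_outP P mEs) (outP_ltU sub EsY Yx); rewrite ltNge PEs.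
move=> w Elo; have [|/ereal_dist_le[r Yr rx]] := pselect (eta%:E < `|Y w - x%:E|).
  by right.
by left; rewrite /= Yr lee_fin; move: Elo rx; rewrite /= ler_norml => ? /andP[]; lra.
Qed.

Lemma cvg_outP_le_cdf (Es : Omega -> R) (F0 : R -> R) X (x : R) :
  measurable_fun setT Es -> (forall r, P [set w | (Es w <= r)%R] = (F0 r)%:E) ->
  (forall e : R, (0 < e)%R -> exists2 del : R, (0 < del)%R &
     forall r, (`|r - x| < del)%R -> (`|F0 r - F0 x| < e)%R) ->
  cvg_prob0 P (fun n w => X n w - x%:E) ->
  (fun n => outP P [set w | (Es w)%:E <= X n w]) @ \oo --> (F0 x)%:E.
Proof.
move=> mEs cdf F0_cont X0.
have mEs_le r : measurable [set w | (Es w <= r)%R].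
  have := mEs measurableT _ (measurable_itv `]-oo, r]); rewrite setTI.
  by congr measurable; apply/seteqP; split => w /=; rewrite in_itv.
apply/fine_cvgP; split; first by apply: nearW => n; exact: outP_fin.
apply/cvgrPdist_lt => e e_gt0.
have e4 : (0 < e / 4)%R by rewrite divr_gt0.
have [del del_gt0 F0_near] := F0_cont _ e4.
have eta_gt0 : (0 < del / 2)%R by rewrite divr_gt0.
have F0_up : (F0 (x + del / 2) < F0 x + e / 4)%R.
  have /F0_near : (`|x + del / 2 - x| < del)%R by rewrite addrC addKr gtr0_norm //; lra.
  by rewrite ltr_norml => /andP[_]; lra.
have F0_lo : (F0 x - e / 4 < F0 (x - del / 2))%R.
  have /F0_near : (`|x - del / 2 - x| < del)%R.
    by rewrite addrC addKr normrN gtr0_norm //; lra.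
  by rewrite ltr_norml => /andP[+ _]; lra.
have [N hN] := X0 _ _ eta_gt0 e4.
near=> n.
have Nn : (N <= n)%N by near: n; exists N.
have up : outP P [set w | (Es w)%:E <= X n w] < (F0 x + e / 4 + e / 4)%:E.
  by apply: outP_le_ub (mEs_le _) _ (hN n Nn); rewrite cdf lte_fin.
have lo : (F0 x - e / 2)%:E <= outP P [set w | (Es w)%:E <= X n w].
  by apply: outP_le_lb (mEs_le _) _ (hN n Nn); rewrite cdf lee_fin; lra.
move: up lo; rewrite -(fineK (outP_fin P _)) lte_fin lee_fin => up lo.
by rewrite /= ltr_norml; apply/andP; split; lra.
Unshelve. all: by end_near.
Qed.

End InProbability.

Lemma quantile_near (R : realType) (G F0 : R -> R) (p x e g : R) :
  {homo G : s t / s <= t} -> (forall r, `|G r - F0 r| <= g) ->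
  F0 (x - e) + g < p -> p <= F0 (x + e) - g ->
  exists2 y, ereal_inf [set r%:E | r in [set r | p <= G r]] = y%:E & `|y - x| <= e.
Proof.
move=> G_mono GF0 lo up.
set S := [set r%:E | r in [set r | p <= G r]].
have inf_up : (ereal_inf S <= (x + e)%:E)%E.
  apply: ereal_inf_lbound; exists (x + e) => //=.
  by have := GF0 (x + e); rewrite ler_norml => /andP[? _]; lra.
have inf_lo : ((x - e)%:E <= ereal_inf S)%E.
  apply: le_ereal_inf_tmp => _ [r /= pGr <-]; rewrite lee_fin leNgt; apply/negP => rxe.
  have := G_mono _ _ (ltW rxe); have := GF0 (x - e).
  by rewrite ler_norml => /andP[_ ?]; lra.
move: inf_up inf_lo; case: (ereal_inf _) => [y| |] //=; rewrite ?leye_eq ?leeNy_eq //.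
by rewrite !lee_fin => yu yl; exists y => //; rewrite ler_norml; apply/andP; split; lra.
Qed.

Lemma ereal_sup_abs_ge0 (R : realType) (f : R -> R) :
  (0 <= ereal_sup [set `|f r|%:E | r in [set: R]])%E.
Proof. by apply: le_ereal_sup_tmp; exists `|f 0|%:E; [exists 0 | rewrite lee_fin]. Qed.

Section LocalModulus.
Variables (R : realType) (d : nat) (supp : set 'rV[R]_d).
Variables (F : 'rV[R]_d -> R -> R) (u : 'rV[R]_d).

Lemma omega_mod_ub v r h : supp v -> enorm (v - u) <= h ->
  (`|F v r - F u r|%:E <= omega_mod supp F u h)%E.
Proof. by move=> supp_v vu; apply: ereal_sup_ubound; exists (v, r). Qed.

Lemma omega_mod_ge0 h : supp u -> 0 <= h -> (0 <= omega_mod supp F u h)%E.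
Proof.
move=> supp_u h_ge0; apply: le_trans (omega_mod_ub 0 supp_u _) => //.
by rewrite subrr enorm0.
Qed.

Lemma le_omega_mod h1 h2 : h1 <= h2 ->
  (omega_mod supp F u h1 <= omega_mod supp F u h2)%E.
Proof.
move=> h12; apply: ereal_sup_le => _ [vr [supp_v vr_h1] <-].
by exists vr => //; split => //; exact: le_trans h12.
Qed.

End LocalModulus.

Lemma sum_sqr_gt0 (R : realFieldType) n (a : 'I_n -> R) :
  \sum_(i < n) a i = 1 -> 0 < \sum_(i < n) a i ^+ 2.
Proof.
move=> a_sum1; rewrite lt_neqAle sumr_ge0 ?andbT => [|i _]; last exact: sqr_ge0.
apply/negP => /eqP/esym/eqP; rewrite psumr_eq0 => [/allP a0|i _]; last exact: sqr_ge0.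
move: a_sum1; rewrite big1 => [/esym/eqP|i _]; first by rewrite oner_eq0.
by apply/eqP; rewrite -sqrf_eq0; exact: implyP (a0 i (mem_index_enum _)) isT.
Qed.

Section WeightedECDF.
Variables (R : realType) (dO : measure_display) (Omega : measurableType dO) (d : nat).
Variables (U : int -> Omega -> 'rV[R]_d) (E : int -> Omega -> R).
Variable F : 'rV[R]_d -> R -> R.
Variable sel : 'rV[R]_d -> forall n, ('I_n -> 'rV[R]_d) -> {set 'I_n}.
Variable q : 'rV[R]_d -> forall n, 'I_n -> Omega -> R.
Variable m : forall n, 'I_n -> R -> Omega -> R.
Variables (u : 'rV[R]_d) (n : nat) (w : Omega).
Arguments q : clear implicits.
Arguments m : clear implicits.

Lemma hrad_ge0 : 0 <= hrad U sel u n w.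
Proof. exact: bigmax_ge_id. Qed.

Lemma Rn_ge0 : (0 <= Rn E q m u n w)%E.
Proof. exact: ereal_sup_abs_ge0. Qed.

Lemma Dn_ge0 : (0 <= Dn U q F m u n w)%E.
Proof. exact: ereal_sup_abs_ge0. Qed.

Lemma Deltan_ge0 : (0 <= Deltan E q F u n w)%E.
Proof. exact: ereal_sup_abs_ge0. Qed.

Lemma Fhat_nondecreasing : (forall i, 0 <= q u n i w) ->
  {homo Fhat E q u n w : r1 r2 / r1 <= r2}.
Proof.
move=> q_ge0 r1 r2 r12; apply: ler_sum => i _; rewrite ler_wpM2l //.
by have [/le_trans/(_ r12)->|] := boolP (E (cidx i) w <= r1).
Qed.

Lemma Fhat_sub_decomp r : \sum_(i < n) q u n i w = 1 ->
  Fhat E q u n w r - F u r =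
    \sum_(i < n) q u n i w * (((E (cidx i) w <= r)%R)%:R - m n i r w)
  + \sum_(i < n) q u n i w * (m n i r w - F (U (cidx i) w) r)
  + \sum_(i < n) q u n i w * (F (U (cidx i) w) r - F u r).
Proof.
move=> q_sum1.
rewrite [in LHS](_ : F u r = \sum_(i < n) q u n i w * F u r); last first.
  by rewrite -mulr_suml q_sum1 mul1r.
rewrite /Fhat -sumrB -!big_split.
by apply: eq_bigr => i _ /=; ring.
Qed.

Lemma local_bias_le (supp : set 'rV[R]_d) r :
  (forall i, 0 <= q u n i w) -> \sum_(i < n) q u n i w = 1 ->
  (forall i, i \notin Sret U sel u n w -> q u n i w = 0) ->
  (forall i : 'I_n, supp (U (cidx i) w)) -> supp u ->
  (`|\sum_(i < n) q u n i w * (F (U (cidx i) w) r - F u r)|%:E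
     <= omega_mod supp F u (hrad U sel u n w))%E.
Proof.
move=> q_ge0 q_sum1 qS supp_U supp_u.
case om: (omega_mod supp F u (hrad U sel u n w)) => [c| |]; last 2 first.
- by rewrite leey.
- by have := omega_mod_ge0 F supp_u hrad_ge0; rewrite om.
have bias_i i : i \in Sret U sel u n w -> `|F (U (cidx i) w) r - F u r| <= c.
  move=> iS; rewrite -lee_fin -om; apply: omega_mod_ub => //.
  exact: le_bigmax_cond.
rewrite lee_fin; apply: le_trans (ler_norm_sum _ _ _) _.
apply: (@le_trans _ _ (\sum_(i < n) q u n i w * c)); last first.
  by rewrite -mulr_suml q_sum1 mul1r.
apply: ler_sum => i _; rewrite normrM ger0_norm //.
have [/bias_i|/qS->] := boolP (i \in Sret U sel u n w); last by rewrite !mul0r.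
exact: ler_wpM2l.
Qed.

Lemma Deltan_le (supp : set 'rV[R]_d) :
  (forall i, 0 <= q u n i w) -> \sum_(i < n) q u n i w = 1 ->
  (forall i, i \notin Sret U sel u n w -> q u n i w = 0) ->
  (forall i : 'I_n, supp (U (cidx i) w)) -> supp u ->
  (Deltan E q F u n w <= Rn E q m u n w + Dn U q F m u n w
                        + omega_mod supp F u (hrad U sel u n w))%E.
Proof.
move=> q_ge0 q_sum1 qS supp_U supp_u; apply: ge_ereal_sup => _ [r _ <-].
rewrite (Fhat_sub_decomp r q_sum1).
set a := \sum_(i < n) _ * (_ - m n i r w); set b := \sum_(i < n) _ * (m n i r w - _).
apply: (@le_trans _ _ ((`|a| + `|b|)%:E + `|\sum_(i < n) q u n i w *
                                          (F (U (cidx i) w) r - F u r)|%:E)%E).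
  by rewrite -EFinD lee_fin (le_trans (ler_normD _ _)) // lerD2r ler_normD.
rewrite EFinD; apply: leeD; first apply: leeD.
- by apply: ereal_sup_ubound; exists r.
- by apply: ereal_sup_ubound; exists r.
- exact: local_bias_le.
Qed.

End WeightedECDF.

Lemma sqrt_natr_unbounded (R : realType) (K : nat -> nat) :
  (forall M : nat, exists N, forall n, (N <= n)%N -> (M <= K n)%N) ->
  forall M : R, exists N, forall n, (N <= n)%N -> M < Num.sqrt (K n)%:R.
Proof.
move=> K_oo M; have [N KN] := K_oo (Num.truncn (M ^+ 2)).+1.
exists N => n /KN Kn; apply: le_lt_trans (ler_norm M) _.
rewrite -sqrtr_sqr ltr_sqrt ?ltr0n ?(leq_trans _ Kn) //.
apply: lt_le_trans (truncnS_gt _) _; rewrite ler_nat; exact: Kn.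
Qed.

Section RetrievalConsistency.
Variables (R : realType) (dO : measure_display) (Omega : measurableType dO).
Variables (P : probability Omega R) (d : nat).
Variables (U : int -> Omega -> 'rV[R]_d) (E : int -> Omega -> R).
Variables (F : 'rV[R]_d -> R -> R) (K : nat -> nat).
Variable sel : 'rV[R]_d -> forall n, ('I_n -> 'rV[R]_d) -> {set 'I_n}.
Variable q : 'rV[R]_d -> forall n, 'I_n -> Omega -> R.
Variable m : forall n, 'I_n -> R -> Omega -> R.
Variable u : 'rV[R]_d.
Arguments q : clear implicits.
Arguments m : clear implicits.

Lemma Deltan_le_ae n :
  (forall t, rvV (U t)) -> strictly_stationary P U E -> weights_ok K U sel q ->
  enorm u = 1 -> supportV P (U 0) u -> (1 <= K n <= n)%N ->
  {ae P, forall w, (Deltan E q F u n w <= Rn E q m u n w + Dn U q F m u n w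
                     + omega_mod (supportV P (U 0)) F u (hrad U sel u n w))%E}.
Proof.
move=> mU stat q_ok u1 supp_u Kn.
apply: filterS (stationary_states_in_supportV mU stat) => w supp_U.
have [q_ge0 q_sum1 qS] := q_ok u n w u1 Kn.
by apply: Deltan_le => // i; exact: supp_U.
Qed.

(* R_n sqrt(K_n) = (R_n / sqrt(sum q^2)) * sqrt(K_n sum q^2). *)
Lemma bounded_prob_Rn_sqrtK :
  (exists N, forall n, (N <= n)%N -> forall w, \sum_(i < n) q u n i w = 1) ->
  bounded_prob P
    (fun n w => (Rn E q m u n w * ((Num.sqrt (sumq2 q u n w))^-1)%:E)%E) ->
  bounded_prob P (fun n w => ((K n)%:R * sumq2 q u n w)%:E) ->
  bounded_prob P (fun n w => (Rn E q m u n w * (Num.sqrt (K n)%:R)%:E)%E).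
Proof.
move=> [N q_sum1] bR bKq2.
apply: bounded_prob_le (bounded_probM bR (bounded_prob_sqrt bKq2)).
exists N => n Nn w; have s_gt0 : 0 < sumq2 q u n w := sum_sqr_gt0 (q_sum1 n Nn w).
by rewrite -muleA -EFinM sqrtrM ?ler0n // mulrCA mulVf ?mulr1 // gt_eqF ?sqrtr_gt0.
Qed.

Lemma cvg_prob0_Deltan (supp : set 'rV[R]_d) :
  supp u ->
  (forall eps : R, 0 < eps -> exists2 delta : R, 0 < delta &
     forall h : R, 0 < h -> h < delta -> (omega_mod supp F u h < eps%:E)%E) ->
  (exists N, forall n, (N <= n)%N ->
     {ae P, forall w, (Deltan E q F u n w <= Rn E q m u n w + Dn U q F m u n w
                        + omega_mod supp F u (hrad U sel u n w))%E}) ->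
  cvg_prob0 P (Rn E q m u) -> cvg_prob0 P (Dn U q F m u) ->
  cvg_prob0 P (fun n w => (hrad U sel u n w)%:E) ->
  cvg_prob0 P (Deltan E q F u).
Proof.
move=> supp_u omega0 [N Delta_le] R0 D0 h0.
have omega_h0 : cvg_prob0 P (fun n w => omega_mod supp F u (hrad U sel u n w)).
  apply: cvg_prob0_modulus omega0 _ h0 => [h|h1 h2 /andP[_]|n w].
  - exact: omega_mod_ge0.
  - exact: le_omega_mod.
  - exact: hrad_ge0.
apply: cvg_prob0_le_ae (cvg_prob0D (cvg_prob0D R0 D0) omega_h0).
exists N => n Nn; apply: filterS (Delta_le n Nn) => w Dw.
by rewrite !gee0_abs ?adde_ge0 ?Rn_ge0 ?Dn_ge0 ?Deltan_ge0 ?omega_mod_ge0 ?hrad_ge0.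
Qed.

Lemma cvg_prob0_xihat (p x : R) :
  (exists N, forall n, (N <= n)%N -> forall w i, 0 <= q u n i w) ->
  (forall e, 0 < e -> F u (x - e) < p < F u (x + e)) ->
  cvg_prob0 P (Deltan E q F u) ->
  cvg_prob0 P (fun n w => (xihat E q p u n w - x%:E)%E).
Proof.
move=> [N0 q_ge0] identified Delta0 eps delta eps_gt0 delta_gt0.
have eps2 : 0 < eps / 2 by rewrite divr_gt0.
have /andP[lo up] := identified _ eps2.
set gap := Num.min (p - F u (x - eps / 2)) (F u (x + eps / 2) - p).
have gap_gt0 : 0 < gap by rewrite lt_min !subr_gt0 lo up.
have [gap_lo gap_up] : gap <= p - F u (x - eps / 2) /\ gap <= F u (x + eps / 2) - p.
  by rewrite !ge_min !lexx orbT.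
have g_gt0 : 0 < gap / 2 by rewrite divr_gt0.
have [N hN] := Delta0 _ _ g_gt0 delta_gt0.
exists (maxn N0 N) => n; rewrite geq_max => /andP[N0n Nn].
apply: le_lt_trans (hN n Nn); apply: outP_mono => w /=; apply: contraTT.
rewrite -!leNgt gee0_abs ?Deltan_ge0 // => Dg.
have Fhat_near r : `|Fhat E q u n w r - F u r| <= gap / 2.
  by rewrite -lee_fin (le_trans _ Dg) //; apply: ereal_sup_ubound; exists r.
have [|||y xi_y yx] := @quantile_near _ _ _ p x (eps / 2) (gap / 2) _ Fhat_near.
- exact: Fhat_nondecreasing (q_ge0 n N0n w).
- lra.
- lra.
by rewrite /xihat xi_y -EFinB lee_fin (le_trans yx) //; lra.
Qed.

End RetrievalConsistency.

Theorem mainTheorem1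
  (R : realType) (dO : measure_display) (Omega : measurableType dO)
  (P : probability Omega R) (d : nat)
  (U : int -> Omega -> 'rV[R]_d) (E : int -> Omega -> R)
  (Ustar : Omega -> 'rV[R]_d) (Estar : Omega -> R)
  (F : 'rV[R]_d -> R -> R) (K : nat -> nat)
  (sel : 'rV[R]_d -> forall n, ('I_n -> 'rV[R]_d) -> {set 'I_n})
  (q : 'rV[R]_d -> forall n, 'I_n -> Omega -> R)
  (u : 'rV[R]_d) (p : R)
  (G : nat -> set (set Omega))
  (m : forall n, 'I_n -> R -> Omega -> R)
  (xs : R)
  (* --- standing setting --- *)
  (hUmeas : forall t, rvV (U t))
  (hUsph : forall t w, enorm (U t w) = 1)
  (hEmeas : forall t, measurable_fun setT (E t))
  (hUsmeas : rvV Ustar)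
  (hUssph : forall w, enorm (Ustar w) = 1)
  (hEsmeas : measurable_fun setT Estar)
  (hstar_law : forall B C, borelV B -> measurable C ->
     P [set w | B (Ustar w) /\ C (Estar w)] =
     P [set w | B (U 0%R w) /\ C (E 0%R w)])
  (hF_cdf : forall v, is_cdf (F v))
  (hF_meas : forall r B, measurable B -> borelV ((fun v => F v r) @^-1` B))
  (hF_cond : forall r B, borelV B ->
     P [set w | Estar w <= r /\ B (Ustar w)] =
     (\int[P]_(w in Ustar @^-1` B) (F (Ustar w) r)%:E)%E)
  (hK : exists N, forall n, (N <= n)%N -> (1 <= K n <= n)%N)
  (hsel : topK_rule K sel)
  (hq : weights_ok K U sel q)
  (hu_sph : enorm u = 1)
  (hu_supp : supportV P (U 0%R) u)
  (hp : 0 < p < 1)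
  (* --- (A1) stochastic admissibility --- *)
  (hstat : strictly_stationary P U E)
  (hG : forall n,
     [/\ sigma_algebra setT (G n),
         G n `<=` measurable,
         (forall (i : 'I_n) B, borelV B -> G n (U (cidx i) @^-1` B)),
         (forall i : 'I_n, G n [set w | i \in Sret U sel u n w]) &
         (forall i : 'I_n, Gmeas (G n) (q u n i))])
  (hm : forall n (i : 'I_n) r,
     cexp_version P (G n) (fun w => ((E (cidx i) w <= r)%R)%:R) (m n i r))
  (hD : cvg_prob0 P (Dn U q F m u))
  (hR : bounded_prob P
     (fun n w => (Rn E q m u n w * ((Num.sqrt (sumq2 q u n w))^-1)%:E)%E))
  (* --- (A2) localization and weight size --- *)
  (hKinf : forall M : nat, exists N, forall n, (N <= n)%N -> (M <= K n)%N)
  (hKn : (fun n => (K n)%:R / n%:R : R) @ \oo --> (0:R))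
  (hh : cvg_prob0 P (fun n w => (hrad U sel u n w)%:E))
  (hq2 : bounded_prob P (fun n w => ((K n)%:R * sumq2 q u n w)%:E))
  (* --- (A3) local continuity and quantile identification --- *)
  (homega : forall eps : R, 0 < eps -> exists2 delta : R, 0 < delta &
     forall h : R, 0 < h -> h < delta ->
       (omega_mod (supportV P (U 0%R)) F u h < eps%:E)%E)
  (hxs : ereal_inf [set r%:E | r in [set r | p <= F u r]] = xs%:E)
  (hcont : forall e : R, 0 < e -> exists2 del : R, 0 < del &
     forall r, `|r - xs| < del -> `|F u r - F u xs| < e)
  (hFxs : F u xs = p)
  (hident : forall eps : R, 0 < eps -> F u (xs - eps) < p < F u (xs + eps)) :
  [/\ (forall n, (1 <= K n <= n)%N ->
         {ae P, forall w, (Deltan E q F u n w <=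
            Rn E q m u n w + Dn U q F m u n w +
            omega_mod (supportV P (U 0%R)) F u (hrad U sel u n w))%E}),
      bounded_prob P
        (fun n w => (Rn E q m u n w * (Num.sqrt (K n)%:R)%:E)%E),
      cvg_prob0 P (Deltan E q F u),
      cvg_prob0 P (fun n w => (xihat E q p u n w - xs%:E)%E) &
      cvg_prob0 P (fun n w => (F u (fine (xihat E q p u n w)) - p)%:E)]
  /\ (forall kappa : 'rV[R]_d -> probability Omega R,
        (forall A, measurable A -> forall a : R,
            borelV [set v | (kappa v A < a%:E)%E]) ->
        (forall A B, measurable A -> borelV B ->
            P (A `&` Ustar @^-1` B) =
            (\int[P]_(w in Ustar @^-1` B) kappa (Ustar w) A)%E) ->
        kappa u [set w | Ustar w = u] = 1%E ->
        (forall r, kappa u [set w | Estar w <= r] = (F u r)%:E) ->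
        cvg_prob0 (kappa u) (fun n w => (xihat E q p u n w - xs%:E)%E) ->
        ((fun n => outP (kappa u)
             [set w | ((Estar w)%:E <= xihat E q p u n w)%E])
           @ \oo --> p%:E)
        /\
        (forall (alpha : R) (Ystar yhatstar : Omega -> R),
           p = 1 - alpha -> (forall w, Ystar w = yhatstar w + Estar w) ->
           (fun n => outP (kappa u)
             [set w | ((Ystar w)%:E <=
                       (yhatstar w)%:E + xihat E q (1 - alpha) (Ustar w) n w)%E])
           @ \oo --> (1 - alpha)%:E)).
Proof.
have [NK K_ok] := hK.
have q_ok n w (NKn : (NK <= n)%N) := hq u n w hu_sph (K_ok n NKn).
have Delta_ae n (Kn : (1 <= K n <= n)%N) :=
  Deltan_le_ae F m hUmeas hstat hq hu_sph hu_supp Kn.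
have RK : bounded_prob P (fun n w => (Rn E q m u n w * (Num.sqrt (K n)%:R)%:E)%E).
  by apply: bounded_prob_Rn_sqrtK hR hq2; exists NK => n NKn w; have [] := q_ok n w NKn.
have Delta0 : cvg_prob0 P (Deltan E q F u).
  apply: cvg_prob0_Deltan hu_supp homega _ _ hD hh.
    by exists NK => n /K_ok; exact: Delta_ae.
  exact: bounded_prob_cvg0 (sqrt_natr_unbounded hKinf) RK.
have xi0 : cvg_prob0 P (fun n w => (xihat E q p u n w - xs%:E)%E).
  apply: cvg_prob0_xihat hident Delta0.
  by exists NK => n NKn w; have [] := q_ok n w NKn.
split.
  split; [exact: Delta_ae | exact: RK | exact: Delta0 | exact: xi0 |].
  by have := cvg_prob0_continuous hcont xi0; rewrite hFxs.
move=> kappa _ _ kappa_u cdf xi0_u.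
have coverage := cvg_outP_le_cdf hEsmeas cdf hcont xi0_u; rewrite hFxs in coverage.
split => // alpha Ystar yhat p_alpha Y_def; rewrite -p_alpha.
rewrite (_ : (fun n => outP _ _) = fun n => outP (kappa u)
               [set w | ((Estar w)%:E <= xihat E q p u n w)%E]) //.
apply/funext => n; apply: (outP_eq_on_prob1 (hUsmeas _ (borelV_set1 u)) kappa_u).
by move=> w /= ->; rewrite Y_def EFinD leeD2lE.
Qed.
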